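(* Let $\mathcal{P}\subseteq\mathbb{R}^{m\times m}$ and $n\ge1$. For a family $\{P_{i,j}\}_{i,j\in[n]}$ of $m\times m$ matrices, let $\mathbf{P}\in\mathbb{R}^{nm\times nm}$ be the block matrix whose $(i,j)$-th block is $P_{i,j}$. Let $$S''=\{\{P_{i,j}\}_{i,j\in[n]}:\operatorname{rank}(\mathbf{P})=m,\ P_{i,j}\in\mathcal{P}\ \forall i,j\in[n],\ P_{i,i}=I\ \forall i\in[n]\},$$ and let $S$ be the set of families $\{P_{i,j}\}_{i,j\in[n]}$ with $P_{i,j}\in\mathcal{P}$, $P_{i,k}P_{k,j}=P_{i,j}$ for all $i,j,k\in[n]$, and $P_{i,i}=I$ for all $i\in[n]$. Then $S''=S$.
   Context: $[n]=\{1,\dots,n\}$. *)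

From HB Require Import structures.
From mathcomp Require Import all_boot all_order all_algebra.
From mathcomp Require Import reals.
Set Implicit Arguments. Unset Strict Implicit. Unset Printing Implicit Defensive.
Import Order.TTheory GRing.Theory Num.Theory.
Local Open Scope ring_scope.

Definition blockP (R : realType) (n m : nat) (Pf : 'I_n -> 'I_n -> 'M[R]_m)
  : 'M[R]_(\sum_(i < n) m, \sum_(j < n) m) :=
  \mxblock_(i < n, j < n) Pf i j.

Definition S2 (R : realType) (n m : nat) (Pcal : 'M[R]_m -> Prop)
  (Pf : 'I_n -> 'I_n -> 'M[R]_m) : Prop :=
  [/\ \rank (blockP Pf) = m,
      (forall i j, Pcal (Pf i j)) &
      (forall i, Pf i i = 1%:M)].

Definition S (R : realType) (n m : nat) (Pcal : 'M[R]_m -> Prop)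
  (Pf : 'I_n -> 'I_n -> 'M[R]_m) : Prop :=
  [/\ (forall i j, Pcal (Pf i j)),
      (forall i j k, Pf i k *m Pf k j = Pf i j) &
      (forall i, Pf i i = 1%:M)].

From HB Require Import structures.
From mathcomp Require Import all_boot all_order all_algebra.
From mathcomp Require Import reals.
Set Implicit Arguments. Unset Strict Implicit. Unset Printing Implicit Defensive.
Import Order.TTheory GRing.Theory Num.Theory.
Local Open Scope ring_scope.

(* Write B for the block matrix and R_k for its k-th block row.  If all
   P_{i,k} P_{k,j} = P_{i,j}, then B = C_k R_k with C_k the k-th block
   column, so rank B <= m; conversely rank B >= rank P_{k,k} = m always.
   If rank B = m, then R_k, which contains the block P_{k,k} = I, already
   has rank m and therefore spans the row space of B; hence R_i = X R_k for
   some X, and reading off blocks k and j gives X = P_{i,k} and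
   P_{i,j} = P_{i,k} P_{k,j}. *)

Section SubmatrixRank.
Variable F : fieldType.

Lemma mxrank_rowsub m m' n (f : 'I_m' -> 'I_m) (A : 'M[F]_(m, n)) :
  (\rank (rowsub f A) <= \rank A)%N.
Proof. exact/mxrankS/rowsub_sub. Qed.

Lemma mxrank_colsub m n n' (g : 'I_n' -> 'I_n) (A : 'M[F]_(m, n)) :
  (\rank (colsub g A) <= \rank A)%N.
Proof.
by rewrite -mxrank_tr -[X in (_ <= X)%N]mxrank_tr trmx_mxsub mxrank_rowsub.
Qed.

Lemma mxrank_mxsub m m' n n' (f : 'I_m' -> 'I_m) (g : 'I_n' -> 'I_n)
    (A : 'M[F]_(m, n)) :
  (\rank (mxsub f g A) <= \rank A)%N.
Proof.
by rewrite mxsubrc; apply: leq_trans (mxrank_rowsub _ _) (mxrank_colsub _ _).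
Qed.

End SubmatrixRank.

Section TransitiveBlocks.
Variables (F : fieldType) (n m : nat) (P : 'I_n -> 'I_n -> 'M[F]_m).

Local Notation B := (\mxblock_(i < n, j < n) P i j).

Lemma mxrank_block_le_mxblock i j : (\rank (P i j) <= \rank B)%N.
Proof. by rewrite -[P i j](mxblockK P) mxrank_mxsub. Qed.

Lemma mxrank_block_le_mxrow i j : (\rank (P i j) <= \rank (\mxrow_l P i l))%N.
Proof. by rewrite -[P i j](mxrowK (P i)) mxrank_colsub. Qed.

Lemma mxblock_transitive_factor k :
    (forall i j, P i k *m P k j = P i j) ->
  B = \mxcol_i P i k *m \mxrow_j P k j.
Proof. by move=> Ptrans; rewrite mul_mxcol_mxrow; apply: eq_mxblock. Qed.

Lemma mxrank_mxblock_transitive k :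
  (forall i j, P i k *m P k j = P i j) -> (\rank B <= m)%N.
Proof.
move=> /mxblock_transitive_factor ->.
exact: leq_trans (mxrankM_maxl _ _) (rank_leq_col _).
Qed.

Lemma mxrow_sub_of_mxrank_mxblock i k :
  (\rank B <= \rank (P k k))%N -> (\mxrow_j P i j <= \mxrow_j P k j)%MS.
Proof.
move=> rankB.
have rowB l : (\mxrow_j P l j <= B)%MS.
  by rewrite -submxcol_matrix rowsub_sub.
have rowk_full : (B <= \mxrow_j P k j)%MS.
  rewrite -(geq_leqif (mxrank_leqif_sup (rowB k))).
  exact: leq_trans rankB (mxrank_block_le_mxrow k k).
exact: submx_trans (rowB i) rowk_full.
Qed.

Lemma mxrow_sub_transitive i k :
    P k k = 1%:M -> (\mxrow_j P i j <= \mxrow_j P k j)%MS ->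
  forall j, P i k *m P k j = P i j.
Proof.
move=> Pkk1 /submxP[X rowiE] j.
have block_rowi l : P i l = X *m P k l.
  by rewrite -[P i l](mxrowK (P i)) rowiE -mul_submxrow mxrowK.
by rewrite (block_rowi k) Pkk1 mulmx1 -block_rowi.
Qed.

End TransitiveBlocks.

Theorem lemma14 (R : realType) (m n : nat) (Pcal : 'M[R]_m -> Prop) :
  (0 < n)%N ->
  forall Pf : 'I_n -> 'I_n -> 'M[R]_m, S2 Pcal Pf <-> S Pcal Pf.
Proof.
move=> n_gt0 Pf; split.
- case=> rankB inPcal Pf1; split=> // i j k.
  apply: mxrow_sub_transitive (Pf1 k) _ j.
  apply: mxrow_sub_of_mxrank_mxblock.
  by rewrite -/(blockP Pf) rankB Pf1 mxrank1.
- case=> inPcal Ptrans Pf1; split=> //.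
  pose k0 : 'I_n := Ordinal n_gt0.
  have rank_le := mxrank_mxblock_transitive (fun i j => Ptrans i j k0).
  apply/eqP; rewrite eqn_leq rank_le /=.
  rewrite -[X in (X <= _)%N](mxrank1 R m) -(Pf1 k0).
  exact: mxrank_block_le_mxblock.
Qed.
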